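(* Let $n\geq1$ and $\eta\in\Omega$. There exists a unique $J_\eta\subset\Lambda_{3,n}$ such that $\{A_n\beta:\beta\in J_\eta\}=T'_\eta$. Moreover, $J_\eta\in S_{A_n}$.
   Context: Notation: for $\beta\in\mathbb N^t$, $|\beta|$ is the coordinate sum, $\gamma\leq\beta$ is coordinatewise, $\binom{\beta}{\gamma}=\prod_i\binom{\beta_i}{\gamma_i}$; $\Lambda_{t,n}=\{\beta\in\mathbb N^t:1\leq|\beta|\leq n\}$, $\lambda_{t,n}=|\Lambda_{t,n}|$; for $v\in\mathbb N^2$, $\bar v=(\binom{v}{\alpha})_{\alpha\in\Lambda_{2,n}}\in\mathbb C^{\lambda_{2,n}}$. $A_n=\begin{pmatrix}1&1&n\\0&1&n+1\end{pmatrix}$. For $\beta\in\Lambda_{3,n}$, $c_\beta=\sum_{\gamma\in\mathbb N^3,\gamma\leq\beta}(-1)^{|\beta-\gamma|}\binom{\beta}{\gamma}\overline{A_n\gamma}$; $S_{A_n}$ is the set of $J\subset\Lambda_{3,n}$ with $|J|=\lambda_{2,n}$ such that the matrix with rows $c_\beta$ ($\beta\in J$) has non-zero determinant. $\Omega$ is the set of sequences $\eta=(z,d_0,\ldots,d_r)$ with $z\in\{0,1\}$, $d_0=0$, $d_i\geq1$ ($1\leq i\leq r$), $\sum d_i=n$. For $j\in\{1,\ldots,n\}$ let $t$ be unique with $\sum_{i=0}^{t-1}d_i<j\leq\sum_{i=0}^td_i$, $c=j-\sum_{i=0}^{t-1}d_i$; $v_{j,\eta}=(\sum_{i\text{ odd},i<t}d_i+c,0)$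 if $z=1,t$ odd; $(0,\sum_{i\text{ even},i<t}d_i+c)$ if $z=1,t$ even; $(0,\sum_{i\text{ odd},i<t}d_i+c)$ if $z=0,t$ odd; $(\sum_{i\text{ even},i<t}d_i+c,0)$ if $z=0,t$ even. $T_{j,\eta}=\{v_{j,\eta}+p(1,1):0\leq p\leq n-j\}$, $T_{0,\eta}=\{(p,p):1\leq p\leq n\}$. Let $r_{j,\eta}=n\cdot\pi_2(v_{j,\eta})$ (second coordinate) and $T'_\eta=T_{0,\eta}\cup\bigcup_{j=1}^n\{v+(r_{j,\eta},r_{j,\eta}):v\in T_{j,\eta}\}$. *)

From HB Require Import structures.
From mathcomp Require Import all_boot all_order all_algebra algC.
Set Implicit Arguments. Unset Strict Implicit. Unset Printing Implicit Defensive.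
Import Order.TTheory GRing.Theory Num.Theory.

(* Points of N^3 with coordinates <= n : a finite type containing Lambda_{3,n}. *)
Definition T3 (n : nat) := ('I_n.+1 * 'I_n.+1 * 'I_n.+1)%type.
(* Points of N^2 with coordinates <= n : a finite type containing Lambda_{2,n}. *)
Definition T2 (n : nat) := ('I_n.+1 * 'I_n.+1)%type.

Definition nat3 n (b : T3 n) : nat * nat * nat := (b.1.1 : nat, b.1.2 : nat, b.2 : nat).

Definition Lam3 (n : nat) : {set T3 n} :=
  [set b : T3 n | (1 <= b.1.1 + b.1.2 + b.2 <= n)%N].
Definition Lam2 (n : nat) : {set T2 n} :=
  [set a : T2 n | (1 <= a.1 + a.2 <= n)%N].

(* A_n = [[1,1,n],[0,1,n+1]] acting on N^3 *)
Definition An (n : nat) (g : nat * nat * nat) : nat * nat :=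
  (g.1.1 + g.1.2 + n * g.2, g.1.2 + n.+1 * g.2)%N.

(* \bar v evaluated at alpha : binom(v, alpha) = C(v1,a1) C(v2,a2) *)
Definition barv n (v : nat * nat) (a : T2 n) : algC :=
  (('C(v.1, a.1) * 'C(v.2, a.2))%N)%:R%R.

Local Open Scope ring_scope.
Definition cvec (n : nat) (b : nat * nat * nat) (a : T2 n) : algC :=
  \sum_(g1 < b.1.1.+1) \sum_(g2 < b.1.2.+1) \sum_(g3 < b.2.+1)
    ((-1) ^+ (b.1.1 - g1 + (b.1.2 - g2) + (b.2 - g3))%N
    * (('C(b.1.1, g1) * 'C(b.1.2, g2) * 'C(b.2, g3))%N)%:R
    * barv (An n (g1 : nat, g2 : nat, g3 : nat)) a)%R.

(* The lambda_{2,n} x lambda_{2,n} matrix with rows c_beta (beta in J, listed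
   in the order of enum J) and columns indexed by Lambda_{2,n} (in the order of
   enum (Lam2 n)).  Only meaningful when #|J| = #|Lam2 n|; the non-vanishing of
   its determinant does not depend on the chosen orderings. *)
Definition cmat (n : nat) (J : {set T3 n}) : 'M[algC]_(#|Lam2 n|) :=
  \matrix_(i < #|Lam2 n|, k < #|Lam2 n|)
     cvec (nat3 (nth (ord0, ord0, ord0) (enum J) i)) (enum_val k).

Local Close Scope ring_scope.
Definition in_SA (n : nat) (J : {set T3 n}) : Prop :=
  [/\ J \subset Lam3 n, #|J| = #|Lam2 n| & (\det (cmat J) != 0)%R].

(* Omega: eta = (z, d_0, ..., d_r), encoded by z and ds = [:: d_0; ...; d_r]. *)
Definition Omega (n z : nat) (ds : seq nat) : Prop :=
  [/\ (z <= 1)%N, (0 < size ds)%N, nth 0 ds 0 = 0%N,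
      (forall i, (1 <= i < size ds)%N -> (1 <= nth 0 ds i)%N) & sumn ds = n].

Definition psum (ds : seq nat) (t : nat) : nat := (\sum_(i < t) nth 0 ds i)%N.

(* the unique t with psum t < j <= psum (t+1) (taken as the least t with
   j <= psum (t+1)) *)
Definition tidx (ds : seq nat) (j : nat) : nat :=
  find (fun t => (j <= psum ds t.+1)%N) (iota 0 (size ds)).

Definition sodd (ds : seq nat) (t : nat) : nat := (\sum_(i < t | odd i) nth 0 ds i)%N.
Definition seven (ds : seq nat) (t : nat) : nat := (\sum_(i < t | ~~ odd i) nth 0 ds i)%N.

Definition vj (z : nat) (ds : seq nat) (j : nat) : nat * nat :=
  let t := tidx ds j in
  let c := (j - psum ds t)%N in
  if z == 1%N then
    (if odd t then (sodd ds t + c, 0)%N else (0, seven ds t + c)%N)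
  else
    (if odd t then (0, sodd ds t + c)%N else (seven ds t + c, 0)%N).

Definition rj (n z : nat) (ds : seq nat) (j : nat) : nat := (n * (vj z ds j).2)%N.

Definition inTp (n z : nat) (ds : seq nat) (v : nat * nat) : Prop :=
  (exists p, (1 <= p <= n)%N /\ v = (p, p))
  \/ (exists j p, [/\ (1 <= j <= n)%N, (p <= n - j)%N &
        v = ((vj z ds j).1 + p + rj n z ds j, (vj z ds j).2 + p + rj n z ds j)%N]).

Definition image_is_Tp (n z : nat) (ds : seq nat) (J : {set T3 n}) : Prop :=
  forall v : nat * nat, (exists2 b, b \in J & An n (nat3 b) = v) <-> inTp n z ds v.

From mathcomp Require Import all_boot all_order all_algebra algC.
From mathcomp Require Import zify.
Set Implicit Arguments. Unset Strict Implicit. Unset Printing Implicit Defensive.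
Import GRing.Theory Num.Theory.

(* Number the blocks of eta so that j lies in block t(j); then v_j records the
   rank of j among the indices in blocks of the same parity, on the axis chosen
   by that parity and z.  Hence (j, p) |-> (v_j.1, p, v_j.2) is injective on
   {j + p <= n}, its image is J_eta u {0}, this image is downward closed in N^3,
   and A_n maps J_eta onto T'_eta; uniqueness holds because A_n is injective on
   {0..n}^3.
   For the determinant, let w be orthogonal to the rows c_beta, beta in J_eta,
   and put G(g) = sum_k w_k binom(A_n g, alpha_k).  The relation for c_beta
   says that a finite difference of G at beta vanishes; since G(0) = 0 and
   J_eta u {0} is downward closed, G vanishes on it.  In the coordinates
   X = v, Y = u - v the polynomial sum_k w_k binom(u, a_k) binom(v, b_k), of
   total degree <= n, then vanishes at n + 1 - j distinct points of each of the
   n + 1 distinct lines Y = v_j.1 - v_j.2, so it is zero; as the binomial basis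
   is triangular, w = 0. *)

Section ColourRank.

Variable f : nat -> bool.

Definition colour_rank (j : nat) : nat := count (fun i => f i == f j) (iota 1 j).

Lemma colour_rank_le j : colour_rank j <= j.
Proof. by rewrite /colour_rank (leq_trans (count_size _ _)) ?size_iota. Qed.

Lemma colour_rank_gt0 j : 0 < j -> 0 < colour_rank j.
Proof.
move=> j_gt0; rewrite /colour_rank -has_count; apply/hasP.
by exists j; rewrite ?mem_iota ?eqxx //; lia.
Qed.

Lemma colour_rank_ltn i j : 0 < i < j -> f i = f j -> colour_rank i < colour_rank j.
Proof.
move=> /andP[i_gt0 lt_ij] fij; rewrite /colour_rank -fij.
rewrite -(subnKC (ltnW lt_ij)) iotaD count_cat -[X in X < _]addn0 ltn_add2l.
rewrite -has_count; apply/hasP; exists j; last by rewrite fij.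
by rewrite mem_iota; lia.
Qed.

Lemma colour_rank_inj i j :
  0 < i -> 0 < j -> f i = f j -> colour_rank i = colour_rank j -> i = j.
Proof.
move=> i_gt0 j_gt0 fij eq_rk; case: (ltngtP i j) => // [lt_ij | lt_ji].
  by have := colour_rank_ltn (introT andP (conj i_gt0 lt_ij)) fij; rewrite eq_rk ltnn.
by have := colour_rank_ltn (introT andP (conj j_gt0 lt_ji)) (esym fij); rewrite eq_rk ltnn.
Qed.

Lemma colour_rank_surj j r : 0 < r <= colour_rank j ->
  exists2 i, 0 < i <= j & f i = f j /\ colour_rank i = r.
Proof.
rewrite /colour_rank; move: (f j) => c.
elim: j => [|j IHj] r_bd; first by move: r_bd => /=; lia.
move: r_bd; rewrite -[j.+1]addn1 iotaD count_cat /= addn0 add1n.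
case: (leqP r (count (fun i => f i == c) (iota 1 j))) => [le_r r_bd | lt_r].
  by have [|i i_bd fic] := IHj; [lia | exists i => //; lia].
case fjc: (f j.+1 == c) => /= r_bd; last by lia.
move/eqP: fjc => fjc; exists j.+1; first lia.
by rewrite fjc -[j.+1]addn1 iotaD count_cat /= add1n fjc eqxx; lia.
Qed.

End ColourRank.

Lemma psumS ds t : psum ds t.+1 = psum ds t + nth 0 ds t.
Proof. by rewrite /psum big_ord_recr. Qed.

Lemma psum0 ds : psum ds 0 = 0.
Proof. by rewrite /psum big_ord0. Qed.

Lemma psum_homo ds : {homo psum ds : s t / s <= t}.
Proof.
move=> s t le_st; rewrite -(subnKC le_st).
by elim: (t - s) => [|k IHk]; rewrite ?addn0 // addnS psumS; lia.
Qed.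

Lemma psum_sumn ds t : size ds <= t -> psum ds t = sumn ds.
Proof.
move=> le_t; rewrite -(subnKC le_t); elim: (t - size ds) => [|k IHk].
  by rewrite addn0 /psum sumnE (big_nth 0) big_mkord.
by rewrite addnS psumS IHk nth_default ?addn0 //; lia.
Qed.

Lemma find_iota0 (a : pred nat) m t :
  t < m -> a t -> (forall i, i < t -> ~~ a i) -> find a (iota 0 m) = t.
Proof.
move=> lt_tm a_t a_lt.
have has_a : has a (iota 0 m) by apply/hasP; exists t; rewrite ?mem_iota.
have lt_find : find a (iota 0 m) < m by rewrite -[m in _ < m](size_iota 0) -has_find.
case: (ltngtP (find a (iota 0 m)) t) => // [/a_lt | lt_t].
  by have := nth_find 0 has_a; rewrite nth_iota // add0n => ->.
by have := before_find 0 lt_t; rewrite nth_iota ?a_t //; lia.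
Qed.

Lemma tidx_eq ds j t : t < size ds -> psum ds t < j <= psum ds t.+1 -> tidx ds j = t.
Proof.
move=> lt_t /andP[lt_j le_j]; apply: find_iota0 => // i lt_it.
by rewrite -ltnNge (leq_ltn_trans (psum_homo ds lt_it)).
Qed.

Lemma tidx0 ds : tidx ds 0 = 0.
Proof. by rewrite /tidx; case: (size ds). Qed.

Definition block_parity (ds : seq nat) (j : nat) : bool := odd (tidx ds j).

Section Blocks.

Variable ds : seq nat.
Hypothesis size_ds_gt0 : 0 < size ds.
Hypothesis block_gt0 : forall i, 0 < i < size ds -> 0 < nth 0 ds i.

Lemma tidx_bounds j : j <= sumn ds -> psum ds (tidx ds j) <= j <= psum ds (tidx ds j).+1.
Proof.
move=> le_j; set a : pred nat := fun t => j <= psum ds t.+1.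
have has_a : has a (iota 0 (size ds)).
  apply/hasP; exists (size ds).-1; first by rewrite mem_iota; lia.
  by rewrite /a prednK // psum_sumn.
have lt_find : tidx ds j < size ds by rewrite -[X in _ < X](size_iota 0) -has_find.
have a_tidx : j <= psum ds (tidx ds j).+1.
  by have := nth_find 0 has_a; rewrite nth_iota.
rewrite a_tidx andbT.
case E: (tidx ds j) => [|t]; first by rewrite psum0.
have /(before_find 0) : t < tidx ds j by rewrite E.
by rewrite nth_iota ?add0n /a; lia.
Qed.

Lemma tidxS j : j < sumn ds ->
  tidx ds j.+1 = if j < psum ds (tidx ds j).+1 then tidx ds j else (tidx ds j).+1.
Proof.
move=> lt_j; have /andP[ge_j le_j] := tidx_bounds (ltnW lt_j).
have lt_size : tidx ds j < size ds.
  by rewrite ltnNge; apply/negP => /psum_sumn E; move: lt_j; rewrite -E; lia.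
case: ifP => [lt_j' | /negbT]; first by apply: tidx_eq => //; lia.
rewrite -leqNgt => ge_j'; have E : psum ds (tidx ds j).+1 = j by lia.
have lt_size' : (tidx ds j).+1 < size ds.
  by rewrite ltnNge; apply/negP => /psum_sumn; lia.
have /block_gt0 d_gt0 : 0 < (tidx ds j).+1 < size ds by rewrite lt_size'.
by apply: tidx_eq => //; rewrite [psum ds _.+2]psumS E; lia.
Qed.

Lemma count_block_parity j e : j <= sumn ds ->
  count (fun i => block_parity ds i == e) (iota 1 j) =
  \sum_(i < tidx ds j | odd i == e) nth 0 ds i
  + (odd (tidx ds j) == e) * (j - psum ds (tidx ds j)).
Proof.
elim: j => [_ | j IHj lt_j]; first by rewrite tidx0 big_ord0 psum0 muln0.
rewrite -[j.+1]addn1 iotaD count_cat /= addn0 add1n addn1 IHj ?(ltnW lt_j) //.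
rewrite /block_parity (tidxS lt_j).
have /andP[ge_j le_j] := tidx_bounds (ltnW lt_j).
case: ifP => [lt_j' | /negbT]; first by case: (odd _ == e) => /=; lia.
rewrite -leqNgt; move: le_j; rewrite psumS => le_j ge_j'.
rewrite [in RHS]big_mkcond big_ord_recr /= -big_mkcond /=.
by clear IHj; case: (odd (tidx ds j)); case: e => /=; lia.
Qed.

Lemma vj_colour_rank z j : j <= sumn ds ->
  vj z ds j = if (z == 1) == block_parity ds j
              then (colour_rank (block_parity ds) j, 0)
              else (0, colour_rank (block_parity ds) j).
Proof.
move=> le_j; rewrite /colour_rank count_block_parity // /block_parity eqxx mul1n.
rewrite /vj /sodd /seven; case: (z == 1); case: (odd (tidx ds j)) => /=;
  by congr (_ + _, _) || congr (_, _ + _); apply: eq_bigl => i; case: (odd i).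
Qed.

End Blocks.

Lemma vj0 z ds : vj z ds 0 = (0, 0).
Proof. by rewrite /vj tidx0 psum0 /sodd /seven !big_ord0; case: (z == 1). Qed.

Definition vpoint z ds j p : nat * nat * nat := ((vj z ds j).1, p, (vj z ds j).2).

Definition is_vpoint n z ds (g : nat * nat * nat) : Prop :=
  exists j p, j + p <= n /\ g = vpoint z ds j p.

Section VPoints.

Variables (n z : nat) (ds : seq nat).
Hypothesis etaP : Omega n z ds.

Let parity := block_parity ds.

Lemma vjE j : j <= n ->
  vj z ds j = if (z == 1) == parity j then (colour_rank parity j, 0)
              else (0, colour_rank parity j).
Proof.
case: etaP => _ size_gt0 _ block_gt0 <-; exact: vj_colour_rank.
Qed.

Lemma vj_norm j : j <= n -> (vj z ds j).1 + (vj z ds j).2 = colour_rank parity j.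
Proof. by move=> le_j; rewrite vjE //; case: ifP => /=; rewrite ?addn0. Qed.

Lemma vj_axis j : j <= n -> (vj z ds j).1 * (vj z ds j).2 = 0.
Proof. by move=> le_j; rewrite vjE //; case: ifP => /=; rewrite ?muln0. Qed.

Lemma vj_inj i j : i <= n -> j <= n -> vj z ds i = vj z ds j -> i = j.
Proof.
move=> le_i le_j eq_v.
have eq_rk : colour_rank parity i = colour_rank parity j by rewrite -!vj_norm // eq_v.
have rk_gt0 := @colour_rank_gt0 parity.
case: (posnP i) eq_rk => [-> | i_gt0]; case: (posnP j) => [-> | j_gt0] // eq_rk.
- by have := rk_gt0 j j_gt0; rewrite -eq_rk.
- by have := rk_gt0 i i_gt0; rewrite eq_rk.
apply: (colour_rank_inj i_gt0 j_gt0 _ eq_rk).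
move: eq_v; rewrite !vjE //; have := rk_gt0 i i_gt0; have := rk_gt0 j j_gt0.
by case: (parity i); case: (parity j); case: (z == 1) => //= ? ? [] ? ?; lia.
Qed.

Lemma vj_le j : j <= n -> (vj z ds j).1 + (vj z ds j).2 <= j.
Proof. by move=> le_j; rewrite vj_norm // colour_rank_le. Qed.

Lemma vj_rank_surj j r : j <= n -> 0 < r <= colour_rank parity j ->
  exists2 i, i <= j & vj z ds i = if (z == 1) == parity j then (r, 0) else (0, r).
Proof.
move=> le_j /(colour_rank_surj) [i /andP[_ le_ij] [eq_par rk_i]].
by exists i => //; rewrite vjE ?eq_par ?rk_i //; lia.
Qed.

Lemma is_vpoint_downward b1 b2 b3 g1 g2 g3 : is_vpoint n z ds (b1, b2, b3) ->
  g1 <= b1 -> g2 <= b2 -> g3 <= b3 -> is_vpoint n z ds (g1, g2, g3).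
Proof.
move=> [j [p [le_jp [-> -> ->]]]] le1 le2 le3.
have le_j : j <= n by lia.
have [r0 | r_gt0] := posnP (g1 + g3).
  by exists 0, g2; split; [lia | rewrite /vpoint vj0 /=; congr (_, _, _); lia].
have [|i le_ij vj_i] := vj_rank_surj (r := g1 + g3) le_j.
  by move: le1 le3; rewrite -vj_norm //; have := vj_axis le_j; lia.
exists i, g2; split; first lia.
move: le1 le3; rewrite /vpoint vj_i vjE //.
by case: ifP => _ /= le1 le3; congr (_, _, _); lia.
Qed.

End VPoints.

Lemma An_nat3_inj n (b b' : T3 n) : An n (nat3 b) = An n (nat3 b') -> b = b'.
Proof.
case: b b' => [[b1 b2] b3] [[c1 c2] c3]; rewrite /An /nat3 /= => -[e1 e2].
have e_2 : (b2 : nat) = c2.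
  have := congr1 (modn^~ n.+1) e2.
  by rewrite ![_ + n.+1 * _]addnC ![n.+1 * _]mulnC !modnMDl !modn_small.
have e_3 : (b3 : nat) = c3 by move: e2; rewrite e_2 => /addnI /eqP; rewrite eqn_mul2l => /eqP.
have e_1 : (b1 : nat) = c1 by move: e1; rewrite e_2 e_3; lia.
by congr (_, _, _); apply: val_inj.
Qed.

Lemma An_vpoint n z ds j p :
  An n (vpoint z ds j p) = ((vj z ds j).1 + p + rj n z ds j, (vj z ds j).2 + p + rj n z ds j).
Proof. by rewrite /An /vpoint /rj /=; congr (_, _); lia. Qed.

Definition Jpoint n z ds (x : T2 n) : T3 n :=
  (inord (vj z ds x.1).1, x.2, inord (vj z ds x.1).2).

Definition Jeta n z ds : {set T3 n} := [set Jpoint z ds x | x in Lam2 n].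

Section SetJeta.

Variables (n z : nat) (ds : seq nat).
Hypothesis etaP : Omega n z ds.

Lemma nat3_Jpoint (x : T2 n) : nat3 (Jpoint z ds x) = vpoint z ds x.1 x.2.
Proof.
have le_x1 : x.1 <= n by rewrite -ltnS.
have bd := vj_le etaP le_x1; rewrite /nat3 /Jpoint /vpoint /= !inordK //; lia.
Qed.

Lemma Jpoint_inj : {in Lam2 n &, injective (Jpoint z ds)}.
Proof.
move=> [x1 x2] [y1 y2] _ _ /(congr1 (@nat3 n)); rewrite !nat3_Jpoint /vpoint /= => -[e1 e2 e3].
have /val_inj -> : (x1 : nat) = y1.
  apply: (vj_inj etaP (ltnSE (ltn_ord x1)) (ltnSE (ltn_ord y1))).
  by move: e1 e3; case: (vj z ds x1) => ? ?; case: (vj z ds y1) => ? ? /= -> ->.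
by rewrite (val_inj e2).
Qed.

Lemma card_Jeta : #|Jeta n z ds| = #|Lam2 n|.
Proof. exact: card_in_imset Jpoint_inj. Qed.

Lemma Jeta_sub : Jeta n z ds \subset Lam3 n.
Proof.
apply/subsetP => _ /imsetP[[x1 x2] x_in ->]; move: x_in; rewrite !inE.
have := congr1 (fun g => g.1.1 + g.1.2 + g.2) (nat3_Jpoint (x1, x2)).
rewrite /nat3 /vpoint /= => ->.
have le_x1 : x1 <= n by rewrite -ltnS.
have := vj_le etaP le_x1; have := vj_norm etaP le_x1.
case: (posnP x1) => [-> | x1_gt0]; first by rewrite vj0 /=; lia.
by have := colour_rank_gt0 (block_parity ds) x1_gt0; lia.
Qed.

Lemma vpoint_Jeta j p : 0 < j + p <= n ->
  exists2 b, b \in Jeta n z ds & nat3 b = vpoint z ds j p.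
Proof.
move=> jp_bd; exists (Jpoint z ds (inord j, inord p)).
  by apply/imsetP; exists (inord j, inord p); rewrite // inE /= !inordK //; lia.
by rewrite nat3_Jpoint /= !inordK //; lia.
Qed.

Lemma inTpP v : inTp n z ds v <-> exists j p, 0 < j + p <= n /\ v = An n (vpoint z ds j p).
Proof.
rewrite /inTp; split.
  case=> [[p [p_bd ->]] | [j [p [j_bd p_bd ->]]]].
    by exists 0, p; rewrite An_vpoint /rj vj0 /=; split; [lia | congr (_, _); lia].
  by exists j, p; rewrite An_vpoint; split => //; lia.
move=> [j [p [jp_bd ->]]]; rewrite An_vpoint.
case: (posnP j) => [j0 | j_gt0]; last by right; exists j, p; split => //; lia.
by left; exists p; rewrite j0 /rj vj0 /=; split; [lia | congr (_, _); lia].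
Qed.

Lemma Jeta_image : image_is_Tp z ds (Jeta n z ds).
Proof.
move=> v; rewrite inTpP; split.
  move=> [_ /imsetP[[x1 x2] x_in ->] <-]; exists x1, x2; rewrite nat3_Jpoint.
  by move: x_in; rewrite inE.
move=> [j [p [jp_bd ->]]]; have [b b_in eq_b] := vpoint_Jeta jp_bd.
by exists b; rewrite ?eq_b.
Qed.

End SetJeta.

Lemma eq_An_image n (J J' : {set T3 n}) :
  (forall v, (exists2 b, b \in J & An n (nat3 b) = v) <->
             (exists2 b, b \in J' & An n (nat3 b) = v)) ->
  J = J'.
Proof.
move=> eq_img; apply/setP => b; apply/idP/idP => b_in.
  by have [|b' b'_in /An_nat3_inj <-] := iffLR (eq_img (An n (nat3 b))); first by exists b.
by have [|b' b'_in /An_nat3_inj <-] := iffRL (eq_img (An n (nat3 b))); first by exists b.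
Qed.

Local Open Scope ring_scope.

Definition totdeg_le (R : nzRingType) (n : nat) (Q : {poly {poly R}}) : Prop :=
  forall k, (size (Q`_k)%R <= n.+1 - k)%N.

Section TotalDegree.

Variable R : nzRingType.
Implicit Types (P Q : {poly {poly R}}) (m n : nat).

Lemma totdeg_leW m n Q : (m <= n)%N -> totdeg_le m Q -> totdeg_le n Q.
Proof. by move=> le_mn Q_deg k; apply: leq_trans (Q_deg k) _; lia. Qed.

Lemma totdeg_leD n P Q : totdeg_le n P -> totdeg_le n Q -> totdeg_le n (P + Q).
Proof.
by move=> P_deg Q_deg k; rewrite coefD (leq_trans (size_polyD _ _)) // geq_max P_deg Q_deg.
Qed.

Lemma totdeg_le_sum n (I : Type) (r : seq I) (F : I -> {poly {poly R}}) :
  (forall i, totdeg_le n (F i)) -> totdeg_le n (\sum_(i <- r) F i).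
Proof.
move=> F_deg; elim/big_ind: _ => //; last exact: totdeg_leD.
by move=> k; rewrite coef0 size_poly0.
Qed.

Lemma totdeg_leM m n P Q : totdeg_le m P -> totdeg_le n Q -> totdeg_le (m + n) (P * Q).
Proof.
move=> P_deg Q_deg k; rewrite coefM; elim/big_ind: _ => //.
- by rewrite size_poly0.
- by move=> p q p_deg q_deg; rewrite (leq_trans (size_polyD _ _)) // geq_max p_deg.
move=> [i /= lt_ik] _.
have [-> | P_neq0] := eqVneq P`_i 0; first by rewrite mul0r size_poly0.
have [-> | Q_neq0] := eqVneq Q`_(k - i) 0; first by rewrite mulr0 size_poly0.
apply: leq_trans (size_polyMleq _ _) _.
move: (P_deg i) (Q_deg (k - i)%N); rewrite -size_poly_gt0 in P_neq0.
rewrite -size_poly_gt0 in Q_neq0; move: P_neq0 Q_neq0.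
set a := size _; set b := size _; lia.
Qed.

Lemma totdeg_leC (a : R) : totdeg_le 0 a%:P%:P.
Proof. by case=> [|k]; rewrite coefC //= ?size_poly0 // size_polyC leq_b1. Qed.

Lemma totdeg_le_XaddC (q : {poly R}) : (size q <= 2)%N -> totdeg_le 1 ('X + q%:P).
Proof.
by move=> q_size [|[|k]]; rewrite coefD coefX coefC /= ?add0r ?addr0 ?size_poly1 ?size_poly0.
Qed.

Lemma totdeg_le_prod n (F : nat -> {poly {poly R}}) :
  (forall i, totdeg_le 1 (F i)) -> totdeg_le n (\prod_(i < n) F i).
Proof.
move=> F_deg; elim: n => [|n IHn]; first by rewrite big_ord0 -[1]/(1%:P%:P); exact: totdeg_leC.
by rewrite big_ord_recr /= -[n.+1]addn1; apply: totdeg_leM.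
Qed.

End TotalDegree.

Lemma horner2_map (R : comNzRingType) (P : {poly {poly R}}) a b :
  P.[a, b] = (map_poly (horner_eval b) P).[a].
Proof. by rewrite -[in RHS](hornerC a b) horner_map. Qed.

Section StaircaseVanishing.

Variables (R : idomainType) (n : nat) (Q : {poly {poly R}}).
Variables (c : nat -> R) (y : nat -> nat -> R).
Hypothesis Q_deg : totdeg_le n Q.
Hypothesis c_inj : forall i j, (i <= n)%N -> (j <= n)%N -> c i = c j -> i = j.
Hypothesis y_inj :
  forall j p p', (p <= n - j)%N -> (p' <= n - j)%N -> y j p = y j p' -> p = p'.
Hypothesis Q_root : forall j p, (j <= n)%N -> (p <= n - j)%N -> Q.[y j p, c j] = 0.

Lemma coefXY_eq0 j : (j <= n.+1)%N -> (forall i k, (i < j)%N -> (Q`_k).[c i] = 0) ->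
  forall k, (n.+1 - k <= j)%N -> Q`_k = 0.
Proof.
move=> le_j Q_c k le_k; apply: (@roots_geq_poly_eq0 _ _ [seq c i | i <- iota 0 j]).
- by apply/allP => _ /mapP[i + ->]; rewrite mem_iota => i_lt; apply/eqP/Q_c.
- rewrite map_inj_in_uniq ?iota_uniq // => i i'.
  by rewrite !mem_iota => ? ?; apply: c_inj; lia.
by rewrite size_map size_iota (leq_trans (Q_deg k)).
Qed.

Lemma coefXY_root_step j : (j <= n)%N -> (forall i k, (i < j)%N -> (Q`_k).[c i] = 0) ->
  forall k, (Q`_k).[c j] = 0.
Proof.
move=> le_j Q_c k.
have Qc0 : map_poly (horner_eval (c j)) Q = 0.
  apply: (@roots_geq_poly_eq0 _ _ [seq y j p | p <- iota 0 (n - j).+1]).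
  - apply/allP => _ /mapP[p + ->]; rewrite mem_iota => p_lt.
    by rewrite /root -horner2_map Q_root //; lia.
  - rewrite map_inj_in_uniq ?iota_uniq // => p p'.
    by rewrite !mem_iota => ? ?; apply: y_inj; lia.
  rewrite size_map size_iota; apply/leq_sizeP => k' le_k'.
  rewrite coef_map_id0 ?horner_evalE ?horner0 //.
  by rewrite (coefXY_eq0 (leqW le_j) Q_c) ?horner0 //; lia.
by rewrite -horner_evalE -(coef_map_id0 _ _ (horner0 (c j))) Qc0 coef0.
Qed.

Lemma staircase_root_eq0 : Q = 0.
Proof.
have Q_c j : (j <= n.+1)%N -> forall i k, (i < j)%N -> (Q`_k).[c i] = 0.
  elim: j => [//|j IHj] le_j i k; rewrite ltnS leq_eqVlt => /orP[/eqP -> | lt_ij].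
    exact: coefXY_root_step le_j (IHj (ltnW le_j)) k.
  exact: IHj (ltnW le_j) i k lt_ij.
by apply/polyP => k; rewrite coef0 (coefXY_eq0 (leqnn _) (Q_c _ (leqnn _))) //; lia.
Qed.

End StaircaseVanishing.

Lemma natr_ffact (R : nzRingType) m a : (m ^_ a)%:R = \prod_(i < a) (m%:R - i%:R) :> R.
Proof.
elim: a => [|a IHa]; first by rewrite ffactn0 big_ord0.
rewrite big_ord_recr /= -IHa ffactnSr natrM.
by case: (leqP a m) => [le_am | lt_ma]; [rewrite natrB | rewrite ffact_small // mulr0n !mul0r].
Qed.

(* With 'X the outer and 'Y = 'X%:P the inner variable, this is (X + Y)^_a * X^_b. *)
Definition ffactXY (R : nzRingType) a b : {poly {poly R}} :=
  \prod_(i < a) ('X + ('X - i%:R%:P)%:P) * \prod_(i < b) ('X + (- i%:R%:P)%:P).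

Lemma horner2_ffactXY (R : comNzRingType) a b (u v : nat) :
  (ffactXY R a b).[v%:R, u%:R - v%:R] = (u ^_ a * v ^_ b)%:R.
Proof.
rewrite /ffactXY hornerM !horner_prod hornerM !horner_prod natrM !natr_ffact.
by congr (_ * _); apply: eq_bigr => i _;
  rewrite !(hornerD, hornerN, hornerX, hornerC) // addrA subrKC.
Qed.

Lemma totdeg_ffactXY (R : nzRingType) a b : totdeg_le (a + b) (ffactXY R a b).
Proof.
apply: totdeg_leM.
  apply: (@totdeg_le_prod R _ (fun i : nat => 'X + ('X - i%:R%:P)%:P)) => i.
  by apply: totdeg_le_XaddC; rewrite size_XsubC.
apply: (@totdeg_le_prod R _ (fun i : nat => 'X + (- i%:R%:P)%:P)) => i.
by apply: totdeg_le_XaddC; rewrite size_polyN (leq_trans (size_polyC_leq1 _)).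
Qed.

Lemma natr_sub_inj (R : numDomainType) (a b a' b' : nat) :
  (a * b = 0)%N -> (a' * b' = 0)%N -> a%:R - b%:R = a'%:R - b'%:R :> R -> a = a' /\ b = b'.
Proof.
move=> ab0 ab0' e; have : (a + b')%:R = (a' + b)%:R :> R.
  by rewrite !natrD -[a%:R](subrK b%:R) e addrAC subrK.
by move/eqP; rewrite eqr_nat => /eqP; nia.
Qed.

Section BinomialCombination.

Variable n : nat.
Implicit Type w : 'I_#|Lam2 n| -> algC.

Definition binom_comb w : {poly {poly algC}} :=
  \sum_k (w k / ((enum_val k).1`! * (enum_val k).2`!)%:R)%:P%:P
         * ffactXY algC (enum_val k).1 (enum_val k).2.

Lemma totdeg_binom_comb w : totdeg_le n (binom_comb w).
Proof.
apply: totdeg_le_sum => k; apply: (totdeg_leW (m := 0 + _)); last first.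
  by apply: totdeg_leM; [exact: totdeg_leC | exact: totdeg_ffactXY].
by have := enum_valP k; rewrite inE => /andP[].
Qed.

Lemma horner2_binom_comb w (u v : nat) :
  (binom_comb w).[v%:R, u%:R - v%:R] = \sum_k w k * barv (u, v) (enum_val k).
Proof.
rewrite /binom_comb !horner_sum; apply: eq_bigr => k _.
rewrite hornerCM hornerCM horner2_ffactXY /barv /=; case: (enum_val k) => a b /=.
rewrite -!bin_ffact mulnACA [(_ * (a`! * b`!))%:R]natrM mulrACA mulVf ?mulr1 //.
by rewrite pnatr_eq0 -lt0n muln_gt0 !fact_gt0.
Qed.

Lemma barv_free w : (forall u v : nat, \sum_k w k * barv (u, v) (enum_val k) = 0) ->
  forall k, w k = 0.
Proof.
move=> w_perp.
suff w0 N (k : 'I_#|Lam2 n|) : ((enum_val k).1 + (enum_val k).2 < N)%N -> w k = 0.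
  by move=> k; apply: (w0 _ k (ltnSn _)).
elim: N k => [//|N IHN] k lt_kN.
have := w_perp (enum_val k).1 (enum_val k).2.
rewrite (bigD1 k) //= /barv /= !binn muln1 mulr1 big1 ?addr0 // => k' k'_neq.
case: (leqP (enum_val k').1 (enum_val k).1) => [le1 | lt1]; last first.
  by rewrite bin_small // mul0n mulr0.
case: (leqP (enum_val k').2 (enum_val k).2) => [le2 | lt2]; last first.
  by rewrite (bin_small lt2) muln0 mulr0.
rewrite IHN ?mul0r //.
have : enum_val k' != enum_val k by rewrite (inj_eq enum_val_inj).
move: le1 le2 lt_kN; case: (enum_val k') => a' b'; case: (enum_val k) => a b /=.
by rewrite xpair_eqE -!val_eqE /=; lia.
Qed.

End BinomialCombination.

Lemma triple_sum_top (V : nmodType) (b1 b2 b3 : nat) (F : nat -> nat -> nat -> V) :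
  (forall g1 g2 g3, (g1 <= b1)%N -> (g2 <= b2)%N -> (g3 <= b3)%N ->
     (g1 + g2 + g3 < b1 + b2 + b3)%N -> F g1 g2 g3 = 0) ->
  \sum_(g1 < b1.+1) \sum_(g2 < b2.+1) \sum_(g3 < b3.+1) F g1 g2 g3 = F b1 b2 b3.
Proof.
move=> F_low; rewrite big_ord_recr /= big1 ?add0r => [|g1 _]; last first.
  apply: big1 => g2 _; apply: big1 => g3 _.
  by apply: F_low; have := ltn_ord g1; have := ltn_ord g2; have := ltn_ord g3; lia.
rewrite big_ord_recr /= big1 ?add0r => [|g2 _]; last first.
  by apply: big1 => g3 _; apply: F_low; have := ltn_ord g2; have := ltn_ord g3; lia.
by rewrite big_ord_recr /= big1 ?add0r // => g3 _; apply: F_low; have := ltn_ord g3; lia.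
Qed.

Section Determinant.

Variables (n z : nat) (ds : seq nat).
Hypothesis etaP : Omega n z ds.
Variable w : 'I_#|Lam2 n| -> algC.

Definition comb_An (g : nat * nat * nat) : algC := \sum_k w k * barv (An n g) (enum_val k).

Lemma comb_An0 : comb_An (0, 0, 0) = 0.
Proof.
rewrite /comb_An big1 // => k _; rewrite /barv /An /= !muln0 !addn0.
have := enum_valP k; rewrite inE; case: (enum_val k) => a b /=.
by case: (nat_of_ord a) => [|?]; case: (nat_of_ord b) => [|?]; rewrite //= ?bin0n ?muln0 mulr0.
Qed.

Definition diff_term (b : nat * nat * nat) (g1 g2 g3 : nat) : algC :=
  (-1) ^+ (b.1.1 - g1 + (b.1.2 - g2) + (b.2 - g3))%N
  * ('C(b.1.1, g1) * 'C(b.1.2, g2) * 'C(b.2, g3))%N%:R * comb_An (g1, g2, g3).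

Lemma cvec_comb b : \sum_k w k * cvec b (enum_val k) =
  \sum_(g1 < b.1.1.+1) \sum_(g2 < b.1.2.+1) \sum_(g3 < b.2.+1) diff_term b g1 g2 g3.
Proof.
rewrite /cvec /diff_term /comb_An; under eq_bigr do rewrite !big_distrr /=.
rewrite exchange_big; apply: eq_bigr => g1 _; under eq_bigr do rewrite !big_distrr /=.
rewrite exchange_big; apply: eq_bigr => g2 _; under eq_bigr do rewrite big_distrr /=.
rewrite exchange_big; apply: eq_bigr => g3 _; rewrite big_distrr.
by apply: eq_bigr => k _; rewrite mulrCA.
Qed.

Hypothesis w_perp : forall b, b \in Jeta n z ds -> \sum_k w k * cvec (nat3 b) (enum_val k) = 0.

Lemma comb_An_vpoint g : is_vpoint n z ds g -> comb_An g = 0.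
Proof.
suff comb0 N g1 g2 g3 : (g1 + g2 + g3 < N)%N -> is_vpoint n z ds (g1, g2, g3) ->
    comb_An (g1, g2, g3) = 0.
  by case: g => [[g1 g2] g3]; apply: comb0.
elim: N g1 g2 g3 => [//|N IHN] g1 g2 g3 lt_gN g_vp.
have [g0 | g_neq0] := eqVneq (g1, g2, g3) (0, 0, 0); first by rewrite g0 comb_An0.
have [b b_in nat3_b] : exists2 b, b \in Jeta n z ds & nat3 b = (g1, g2, g3).
  case: g_vp => j [p [le_jp eq_g]]; rewrite eq_g; apply: (vpoint_Jeta etaP).
  rewrite le_jp andbT lt0n; apply: contra_neq g_neq0 => jp0.
  have [j0 p0] : j = 0 /\ p = 0 by lia.
  by rewrite eq_g j0 p0 /vpoint vj0.
have := w_perp b_in; rewrite nat3_b cvec_comb /= triple_sum_top.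
  by rewrite /diff_term !subnn !binn expr0 !mul1r.
move=> h1 h2 h3 le1 le2 le3 lt_h; rewrite /diff_term IHN ?mulr0 //; first lia.
exact: (is_vpoint_downward etaP g_vp le1 le2 le3).
Qed.

Lemma binom_comb_eq0 : binom_comb w = 0.
Proof.
pose c j : algC := ((vj z ds j).1)%:R - ((vj z ds j).2)%:R.
pose y j p : algC := (p + n.+1 * (vj z ds j).2)%:R.
apply: (staircase_root_eq0 (c := c) (y := y) (totdeg_binom_comb w)).
- move=> i j le_i le_j e; apply: (vj_inj etaP le_i le_j).
  have [e1 e2] := natr_sub_inj (vj_axis etaP le_i) (vj_axis etaP le_j) e.
  by rewrite [vj _ _ i]surjective_pairing e1 e2 -surjective_pairing.
- by move=> j p p' _ _ /eqP; rewrite eqr_nat eqn_add2r => /eqP.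
move=> j p le_j le_p.
have -> : c j = (An n (vpoint z ds j p)).1%:R - (An n (vpoint z ds j p)).2%:R.
  apply/eqP; rewrite subr_eq addrAC eq_sym subr_eq -!natrD eqr_nat /=; apply/eqP; lia.
have -> : y j p = (An n (vpoint z ds j p)).2%:R by [].
rewrite horner2_binom_comb -surjective_pairing.
by apply: comb_An_vpoint; exists j, p; split => //; lia.
Qed.

End Determinant.

Lemma det_cmat_Jeta n z ds : Omega n z ds -> \det (cmat (Jeta n z ds)) != 0.
Proof.
move=> etaP; rewrite -det_tr; apply/negP => /det0P[v v_neq0 v_ker].
pose w k := v ord0 k.
have w_perp b : b \in Jeta n z ds -> \sum_k w k * cvec (nat3 b) (enum_val k) = 0.
  move=> b_in; have b_idx : (index b (enum (Jeta n z ds)) < #|Lam2 n|)%N.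
    by rewrite -(card_Jeta etaP) cardE index_mem mem_enum.
  have := congr1 (fun M : 'rV_#|Lam2 n| => M ord0 (Ordinal b_idx)) v_ker.
  rewrite !mxE => ker_b; rewrite -[RHS]ker_b.
  by apply: eq_bigr => k _; rewrite !mxE nth_index ?mem_enum.
have w0 : forall k, w k = 0.
  apply: barv_free => u v'.
  by rewrite -horner2_binom_comb (binom_comb_eq0 etaP w_perp) !horner0.
by move/eqP: v_neq0; apply; apply/rowP => k; rewrite mxE; exact: w0.
Qed.

Local Close Scope ring_scope.

Theorem proposition3p4 (n z : nat) (ds : seq nat) :
  (1 <= n)%N -> Omega n z ds ->
  exists J : {set T3 n},
    [/\ J \subset Lam3 n, image_is_Tp z ds J,
        (forall J' : {set T3 n}, J' \subset Lam3 n -> image_is_Tp z ds J' -> J' = J)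
      & in_SA J].
Proof.
move=> _ etaP; exists (Jeta n z ds); split.
- exact: Jeta_sub etaP.
- exact: Jeta_image etaP.
- move=> J' _ J'_img; apply: eq_An_image => v.
  by rewrite (J'_img v) (Jeta_image etaP v).
- by split; [exact: Jeta_sub etaP | exact: card_Jeta etaP | exact: det_cmat_Jeta etaP].
Qed.
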